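(* Let $P$ be a finite poset and $R$ a restriction function on $P$. Then for every $p\in P$ and every $k\in R(p)$ there exists $f\in\mathrm{Inc}^R(P)$ with $f(p)=k$ if and only if $R$ is consistent.
   Context: A restriction function assigns to each $p\in P$ a nonempty finite set $R(p)\subseteq\mathbb{Z}$. $\mathrm{Inc}^R(P)$ is the set of $f:P\to\mathbb{Z}$ with $f(p)\in R(p)$ for all $p$ and $p_1<p_2\Rightarrow f(p_1)<f(p_2)$. $R$ is consistent if for every cover relation $x\lessdot y$ in $P$, $\min R(x)<\min R(y)$ and $\max R(x)<\max R(y)$. *)

From HB Require Import structures.
From mathcomp Require Import all_boot all_order all_algebra.
From mathcomp Require Export finmap.
Set Implicit Arguments. Unset Strict Implicit. Unset Printing Implicit Defensive.
Import Order.TTheory GRing.Theory Num.Theory.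
Open Scope fset_scope.

(* minimum / maximum of a finite set of integers (meaningful for nonempty A) *)
Definition fmin (A : {fset int}) : int :=
  \big[Num.min/head 0%R (enum_fset A)]_(a <- enum_fset A) a.
Definition fmax (A : {fset int}) : int :=
  \big[Num.max/head 0%R (enum_fset A)]_(a <- enum_fset A) a.

Section Restr.
Context {disp : Order.disp_t} {P : finPOrderType disp}.

Definition covers (x y : P) : Prop :=
  (x < y)%O /\ ~ (exists z : P, (x < z)%O /\ (z < y)%O).

Definition in_IncR (R : P -> {fset int}) (f : P -> int) : Prop :=
  (forall p, f p \in R p) /\ (forall p1 p2 : P, (p1 < p2)%O -> (f p1 < f p2)%R).

Definition consistent (R : P -> {fset int}) : Prop :=
  forall x y : P, covers x y ->
    (fmin (R x) < fmin (R y))%R /\ (fmax (R x) < fmax (R y))%R.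
End Restr.

From HB Require Import structures.
From mathcomp Require Import all_boot all_order all_algebra finmap.
Import Order.TTheory GRing.Theory Num.Theory.

(* A realization f with f y = min R(y) gives min R(x) <= f x < f y = min R(y)
   for x < y, and dually for the maxima, so realizability forces consistency.
   Conversely, in a finite poset every strict relation is a chain of covers,
   so consistency makes q |-> min R(q) and q |-> max R(q) strictly
   increasing.  To realize k in R(p), take max R(q) at the q > p, min R(q) at
   the q not above p, and k at p itself; min R <= k <= max R at p and
   min R <= max R everywhere make this map strictly increasing. *)

Section FsetExtrema.
Implicit Types (A : {fset int}) (a : int).

Lemma fmin_le [A a] : a \in A -> (fmin A <= a)%R.
Proof. by move=> aA; apply: (ge_bigmin_seq _ _ xpredT id aA). Qed.

Lemma le_fmax [A a] : a \in A -> (a <= fmax A)%R.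
Proof. by move=> aA; apply: (le_bigmax_seq _ _ xpredT id aA). Qed.

Lemma head_enum_fset_mem A : A != fset0 -> head 0%R (enum_fset A) \in A.
Proof. by rewrite -cardfs_gt0 => A_gt0; rewrite -nth0; apply: mem_nth. Qed.

Lemma fmin_mem [A] : A != fset0 -> fmin A \in A.
Proof.
move=> /head_enum_fset_mem A0; rewrite /fmin big_seq.
apply: (big_ind (fun m => m \in A)) => // a b aA bA.
by rewrite /Order.min; case: ifP.
Qed.

Lemma fmax_mem [A] : A != fset0 -> fmax A \in A.
Proof.
move=> /head_enum_fset_mem A0; rewrite /fmax big_seq.
apply: (big_ind (fun m => m \in A)) => // a b aA bA.
by rewrite /Order.max; case: ifP.
Qed.

Lemma fmin_le_fmax [A] : A != fset0 -> (fmin A <= fmax A)%R.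
Proof. by move=> /fmin_mem /le_fmax. Qed.

End FsetExtrema.

Section CoverChains.
Context {d : Order.disp_t} {P : finPOrderType d}.
Implicit Types x y z : P.

Definition between x y := [set z | (x < z < y)%O].

Lemma between_properl [x y z] : (x < z < y)%O -> between x z \proper between x y.
Proof.
move=> /andP[xz zy]; apply/properP; split.
  by apply/subsetP => w; rewrite !inE => /andP[-> /lt_trans ->].
by exists z; rewrite !inE ?xz ?zy ?ltxx ?andbF.
Qed.

Lemma between_properr [x y z] : (x < z < y)%O -> between z y \proper between x y.
Proof.
move=> /andP[xz zy]; apply/properP; split.
  by apply/subsetP => w; rewrite !inE => /andP[/(lt_trans xz) -> ->].
by exists z; rewrite !inE ?xz ?zy ?ltxx.
Qed.

Lemma covers_homo_lt {d' : Order.disp_t} {T : porderType d'} (g : P -> T) :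
  (forall x y, covers x y -> (g x < g y)%O) -> {homo g : x y / (x < y)%O}.
Proof.
move=> g_covers x y; have [n] := ubnP #|between x y|.
elim: n x y => // n IHn x y; rewrite ltnS => le_n xy.
have [z xzy|no_z] := pickP [pred z | (x < z < y)%O].
  have IHsub u v : between u v \proper between x y -> (u < v)%O -> (g u < g v)%O.
    by move=> uv; apply: IHn; apply: leq_trans (proper_card uv) le_n.
  have /andP[xz zy] := xzy.
  have gxz := IHsub _ _ (between_properl xzy) xz.
  exact: lt_trans gxz (IHsub _ _ (between_properr xzy) zy).
apply: g_covers; split=> // -[z [xz zy]].
by have := no_z z; rewrite /= xz zy.
Qed.

End CoverChains.

Section Restrictions.
Context {d : Order.disp_t} {P : finPOrderType d} (R : P -> {fset int}).
Hypothesis R_neq0 : forall p, R p != fset0.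

Lemma consistent_of_realizable :
  (forall p k, k \in R p -> exists f, in_IncR R f /\ f p = k) -> consistent R.
Proof.
move=> realizable x y [xy _]; split.
  have [f [[fR f_lt] <-]] := realizable y _ (fmin_mem (R_neq0 y)).
  exact: le_lt_trans (fmin_le (fR x)) (f_lt _ _ xy).
have [f [[fR f_lt] <-]] := realizable x _ (fmax_mem (R_neq0 x)).
exact: lt_le_trans (f_lt _ _ xy) (le_fmax (fR y)).
Qed.

Hypothesis R_consistent : consistent R.

Lemma fmin_homo_lt : {homo (fun q => fmin (R q)) : x y / (x < y)%O >-> (x < y)%R}.
Proof. by apply: covers_homo_lt => x y /R_consistent[]. Qed.

Lemma fmax_homo_lt : {homo (fun q => fmax (R q)) : x y / (x < y)%O >-> (x < y)%R}.
Proof. by apply: covers_homo_lt => x y /R_consistent[]. Qed.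

Definition extremal_extension (p : P) (k : int) (q : P) : int :=
  if q == p then k else if (p <= q)%O then fmax (R q) else fmin (R q).

Lemma extremal_extension_IncR [p k] :
  k \in R p -> in_IncR R (extremal_extension p k).
Proof.
rewrite /extremal_extension => kR; split=> [q|q1 q2 q12].
  by case: eqP => [->//|_]; case: ifP => _; [apply: fmax_mem | apply: fmin_mem].
have [q2p|q2p] := eqVneq q2 p.
  rewrite q2p in q12 *; rewrite (lt_eqF q12) (lt_geF q12).
  exact: lt_le_trans (fmin_homo_lt _ _ q12) (fmin_le kR).
have [q1p|q1p] := eqVneq q1 p.
  rewrite q1p in q12 *; rewrite (ltW q12).
  exact: le_lt_trans (le_fmax kR) (fmax_homo_lt _ _ q12).
case: ifP => [pq1|_]; first by rewrite (le_trans pq1 (ltW q12)); apply: fmax_homo_lt.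
case: ifP => _; last exact: fmin_homo_lt.
exact: lt_le_trans (fmin_homo_lt _ _ q12) (fmin_le_fmax (R_neq0 q2)).
Qed.

End Restrictions.

Theorem proposition2p2 (d : Order.disp_t) (P : finPOrderType d)
  (R : P -> {fset int}) (HR : forall p : P, R p != fset0) :
  (forall (p : P) (k : int), k \in R p ->
     exists f : P -> int, in_IncR R f /\ f p = k)
  <-> consistent R.
Proof.
split; first exact: (consistent_of_realizable _ HR).
move=> R_consistent p k kR; exists (extremal_extension R p k); split.
  exact: (extremal_extension_IncR _ HR R_consistent kR).
by rewrite /extremal_extension eqxx.
Qed.
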